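(* Let $R$ be an almost Dedekind domain and let $\alpha$ be an ordinal. Then: (a) for every $P\in\mathrm{Max}(R)$, $PT_\alpha\neq T_\alpha$ if and only if $P\in\mathrm{Crit}_\alpha(R)$; (b) $\mathrm{Crit}_\alpha(R)$ is the image of $\mathrm{Max}(T_\alpha)$ under the canonical restriction map $\mathrm{Max}(T_\alpha)\to\mathrm{Max}(R)$, $Q\mapsto Q\cap R$; (c) $\mathrm{Crit}_\alpha(R)$ is closed in $\mathcal{M}$.
   Context: $R$ almost Dedekind: $R_M$ is a DVR for each maximal $M$; $K$ quotient field. $\mathcal{M}$ is $\mathrm{Max}(R)$ with the inverse topology (restriction of the coarsest topology on $\mathrm{Spec}(R)$ in which Zariski-open Zariski-compact sets are closed). A maximal ideal $M$ of an almost Dedekind domain $A$ is critical if every finitely generated ideal $J\subseteq M$ satisfies $J\subseteq N^2$ for some maximal $N$; $\mathrm{Crit}(A)$ is the set of these. Recursively: $\mathrm{Crit}_0(R)=\mathrm{Max}(R)$, $T_0=R$; $\mathrm{Crit}_{\gamma+1}(R)=\{P\in\mathrm{Max}(R)\mid PT_\gamma\in\mathrm{Crit}(T_\gamma)\}$; $\mathrm{Crit}_\lambda(R)=\bigcap_{\gamma<\lambda}\mathrm{Crit}_\gamma(R)$ for limit $\lambda$; $T_\alpha=\bigcap\{R_P\mid P\in\mathrm{Crit}_\alpha(R)\}$ ($=K$ if empty). *)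

(* Everything lives inside the quotient field K of R:
   rings are subsets (K -> Prop) of K, ideals are subsets of K as well. *)
From HB Require Import structures.
From mathcomp Require Import all_boot all_order all_algebra.
Set Implicit Arguments.
Unset Strict Implicit.
Unset Printing Implicit Defensive.
Import Order.TTheory GRing.Theory Num.Theory.
Local Open Scope ring_scope.

Section Defs.
Variable K : fieldType.

Definition kset := K -> Prop.
Definition subset_of (A B : kset) := forall x, A x -> B x.

Definition subring (A : kset) :=
  [/\ A 0, A 1, (forall x y, A x -> A y -> A (x - y)) &
      (forall x y, A x -> A y -> A (x * y))].

Definition quotient_field (R : kset) :=
  forall x : K, exists a b, [/\ R a, R b, b != 0 & x = a / b].

Definition ideal (A I : kset) :=
  [/\ subset_of I A, I 0, (forall x y, I x -> I y -> I (x + y)) &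
      (forall a x, A a -> I x -> I (a * x))].

Definition max_ideal (A M : kset) :=
  [/\ ideal A M, ~ M 1 &
      forall J, ideal A J -> subset_of M J -> ~ J 1 -> subset_of J M].

Definition prime_ideal (A P : kset) :=
  [/\ ideal A P, ~ P 1 &
      forall x y, A x -> A y -> P (x * y) -> P x \/ P y].

Definition gen_ideal (A S : kset) : kset :=
  fun x => forall J, ideal A J -> subset_of S J -> J x.

Definition ext_ideal (I T : kset) : kset := gen_ideal T I.

Definition sq_ideal (A N : kset) : kset :=
  gen_ideal A (fun x => exists a b, [/\ N a, N b & x = a * b]).

Definition loc (R P : kset) : kset :=
  fun x => exists a b, [/\ R a, R b, ~ P b & x = a / b].

Definition DVR (V : kset) :=
  exists v : K -> int,
  [/\ (forall x y, x != 0 -> y != 0 -> v (x * y) = v x + v y),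
      (forall x y, x != 0 -> y != 0 -> x + y != 0 ->
                   Num.min (v x) (v y) <= v (x + y)),
      (forall n : int, exists x, x != 0 /\ v x = n) &
      (forall x, V x <-> (x = 0 \/ (x != 0 /\ 0 <= v x)))].

Definition almost_dedekind (R : kset) :=
  forall M, max_ideal R M -> DVR (loc R M).

Definition critical (A M : kset) :=
  max_ideal A M /\
  forall s : seq K, (forall x, x \in s -> A x) ->
    subset_of (gen_ideal A (fun x => x \in s)) M ->
    exists N, max_ideal A N /\
      subset_of (gen_ideal A (fun x => x \in s)) (sq_ideal A N).

(* the intersection of the R_P, P in a set C of ideals (= K if C empty) *)
Definition Tof (R : kset) (C : kset -> Prop) : kset :=
  fun x => forall P, C P -> loc R P x.

(* ordinals: elements of an arbitrary well-ordered type (O, lt) *)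
Section Ord.
Variables (O : Type) (lt : O -> O -> Prop) (wf : well_founded lt).

Definition is_succ (g a : O) := lt g a /\ forall b, lt g b -> ~ lt b a.

Definition crit_step (R : kset) (a : O)
  (rec : forall b, lt b a -> kset -> Prop) : kset -> Prop :=
  fun P =>
     ((forall b, ~ lt b a) /\ max_ideal R P)
  \/ (exists g (h : lt g a), [/\ is_succ g a, max_ideal R P &
          critical (Tof R (rec g h)) (ext_ideal P (Tof R (rec g h)))])
  \/ [/\ (exists b, lt b a), (forall g, ~ is_succ g a) &
          forall b (h : lt b a), rec b h P].

Definition Crit (R : kset) : O -> kset -> Prop :=
  Fix wf (fun _ => kset -> Prop) (crit_step R).

Definition Tal (R : kset) (a : O) : kset := Tof R (Crit R a).
End Ord.

Definition zar_open (R : kset) (U : kset -> Prop) :=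
  exists I, ideal R I /\
    forall P, U P <-> (prime_ideal R P /\ ~ subset_of I P).

Definition zar_compact (R : kset) (U : kset -> Prop) :=
  forall (Idx : Type) (F : Idx -> kset -> Prop),
    (forall i, zar_open R (F i)) ->
    (forall P, U P -> exists i, F i P) ->
    exists (n : nat) (f : nat -> Idx),
      forall P, U P -> exists k, (k < n)%N /\ F (f k) P.

(* closed sets of the inverse topology: the smallest family of subsets of
   Spec(R) containing the Zariski-open Zariski-compact sets and closed under
   finite unions and arbitrary intersections *)
Definition inv_closed (R : kset) (X : kset -> Prop) :=
  forall Cl : (kset -> Prop) -> Prop,
    (forall U, zar_open R U -> zar_compact R U -> Cl U) ->
    Cl (fun _ => False) ->
    (forall A B, Cl A -> Cl B -> Cl (fun P => A P \/ B P)) ->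
    (forall (I : Type) (F : I -> kset -> Prop), (forall i, Cl (F i)) ->
        Cl (fun P => prime_ideal R P /\ forall i, F i P)) ->
    Cl X.

Definition closed_in_Max (R : kset) (C : kset -> Prop) :=
  exists X, inv_closed R X /\ forall P, C P <-> (max_ideal R P /\ X P).

End Defs.

(* Write C_a for Crit_a(R) and T_a for the intersection of the R_P, P in C_a.
   The heart of the matter is that every C_a is a set of maximal ideals which is
   separated: each maximal P outside C_a contains a finite set s, with a nonzero
   element, that is contained in no Q of C_a.
   A finitely generated ideal of an almost Dedekind domain is invertible, so
   1 = sum h_i x_i with x_i in s and h_i s inside R; every Q of C_a misses some x
   of s, a unit of R_Q, hence each h_i lies in T_a and P T_a = T_a.  For P in C_a
   we have R <= T_a <= R_P, and the valuation of R_P shows that P T_a is a maximal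
   ideal of T_a lying over P.  Finally C_a is the intersection of the Zariski
   quasi-compact opens D(s) over all separating s, hence closed in the inverse
   topology.  Separation itself is proved by transfinite induction: at a successor
   a = g + 1, the set s is read off a finitely generated ideal of T_g that lies in
   P T_g but in no square of a maximal ideal, i.e. a witness that P T_g is not
   critical. *)

From mathcomp Require Import all_boot all_order all_algebra.
From mathcomp Require Import boolp classical_sets.
From Stdlib Require Import Classical.
From Stdlib Require List.
From mathcomp Require Import ring.
Set Implicit Arguments.
Unset Strict Implicit.
Unset Printing Implicit Defensive.
Import Order.TTheory GRing.Theory Num.Theory.
Local Open Scope ring_scope.

Section Ideals.
Variable K : fieldType.
Implicit Types (A C I J S : kset K).

Lemma subring0 A : subring A -> A 0. Proof. by case. Qed.
Lemma subring1 A : subring A -> A 1. Proof. by case. Qed.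

Lemma subringB A x y : subring A -> A x -> A y -> A (x - y).
Proof. by case=> _ _ + _; apply. Qed.

Lemma subringM A x y : subring A -> A x -> A y -> A (x * y).
Proof. by case=> _ _ _; apply. Qed.

Lemma subringN A x : subring A -> A x -> A (- x).
Proof. by move=> hA hx; rewrite -sub0r; apply: subringB (subring0 hA) hx. Qed.

Lemma subringD A x y : subring A -> A x -> A y -> A (x + y).
Proof. by move=> hA hx hy; rewrite -[y]opprK; apply: subringB (subringN hA hy). Qed.

Lemma subringX A x n : subring A -> A x -> A (x ^+ n).
Proof.
move=> hA hx; elim: n => [|n IH]; first by rewrite expr0; apply: subring1.
by rewrite exprS; apply: subringM.
Qed.

Lemma ideal_sub A I x : ideal A I -> I x -> A x. Proof. by case=> + _ _ _; apply. Qed.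
Lemma ideal0 A I : ideal A I -> I 0. Proof. by case. Qed.

Lemma idealD A I x y : ideal A I -> I x -> I y -> I (x + y).
Proof. by case=> _ _ + _; apply. Qed.

Lemma idealM A I a x : ideal A I -> A a -> I x -> I (a * x).
Proof. by case=> _ _ _; apply. Qed.

Lemma ideal_sum A I (T : Type) (l : seq T) (f : T -> K) :
  ideal A I -> (forall p, List.In p l -> I (f p)) -> I (\sum_(p <- l) f p).
Proof.
move=> hI; elim: l => [|p l IH] hl; first by rewrite big_nil; apply: ideal0 hI.
rewrite big_cons; apply: (idealD hI (hl p (or_introl erefl))).
by apply: IH => q hq; apply: hl; right.
Qed.

Lemma subring_ideal A : subring A -> ideal A A.
Proof. by move=> hA; split=> // [|x y|a x]; [apply: subring0|apply: subringD|apply: subringM]. Qed.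

Lemma subring_sum A (T : Type) (l : seq T) (f : T -> K) :
  subring A -> (forall p, List.In p l -> A (f p)) -> A (\sum_(p <- l) f p).
Proof. by move/subring_ideal; apply: ideal_sum. Qed.

Lemma gen_ideal_sub A S x : S x -> gen_ideal A S x.
Proof. by move=> hx J _; apply. Qed.

Lemma gen_ideal_min A S J : ideal A J -> subset_of S J -> subset_of (gen_ideal A S) J.
Proof. by move=> hJ hS x; apply. Qed.

Lemma gen_ideal_ideal A S : subring A -> subset_of S A -> ideal A (gen_ideal A S).
Proof.
move=> hA hS; split.
- by move=> x; apply; [apply: subring_ideal|].
- by move=> J hJ _; apply: ideal0 hJ.
- by move=> x y hx hy J hJ hSJ; apply: idealD hJ (hx J hJ hSJ) (hy J hJ hSJ).
- by move=> a x ha hx J hJ hSJ; apply: idealM hJ ha (hx J hJ hSJ).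
Qed.

Lemma gen_idealS A S1 S2 : subring A -> subset_of S2 A -> subset_of S1 S2 ->
  subset_of (gen_ideal A S1) (gen_ideal A S2).
Proof.
move=> hA hS2 h12; apply: gen_ideal_min (gen_ideal_ideal hA hS2) _.
by move=> x /h12; apply: gen_ideal_sub.
Qed.

Lemma ideal_full A I : subring A -> ideal A I -> (forall x, I x <-> A x) <-> I 1.
Proof.
move=> hA hI; split=> [full|I1 x]; first by apply/full; apply: subring1.
split=> [|hx]; first exact: ideal_sub hI.
by rewrite -[x]mulr1; apply: idealM hI hx I1.
Qed.

Definition lincomb C S : kset K := fun z => exists l : seq (K * K),
  (forall p, List.In p l -> C p.1 /\ S p.2) /\ z = \sum_(p <- l) p.1 * p.2.

Lemma lincomb_ideal A C S : subring A ->
  (forall a c, A a -> C c -> C (a * c)) -> (forall c x, C c -> S x -> A (c * x)) ->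
  ideal A (lincomb C S).
Proof.
move=> hA hAC hCS; split.
- move=> x [l [hl ->]]; apply: subring_sum => // p /hl [].
  exact: hCS.
- by exists [::]; rewrite big_nil.
- move=> x y [l1 [h1 ->]] [l2 [h2 ->]]; exists (l1 ++ l2); rewrite big_cat; split=> //.
  by move=> p /(List.in_app_or _ _ _) [/h1|/h2].
- move=> a x ha [l [hl ->]]; exists [seq (a * p.1, p.2) | p <- l]; split.
    move=> q /(List.in_map_iff _ _ _) [p [<- /hl [hp1 hp2]]].
    by split=> //=; apply: hAC.
  by rewrite big_map big_distrr; apply: eq_bigr => p _ /=; rewrite mulrA.
Qed.

Lemma lincomb_min A I C S : ideal A I -> subset_of C A -> subset_of S I ->
  subset_of (lincomb C S) I.
Proof.
move=> hI hCA hSI x [l [hl ->]]; apply: (ideal_sum hI) => p /hl [hp1 hp2].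
exact: idealM hI (hCA _ hp1) (hSI _ hp2).
Qed.

Lemma gen_ideal_lincomb A S : subring A -> subset_of S A ->
  subset_of (gen_ideal A S) (lincomb A S).
Proof.
move=> hA hSA; apply: gen_ideal_min.
  by apply: lincomb_ideal => // *; apply: subringM => //; apply: hSA.
move=> x hx; exists [:: (1, x)]; rewrite big_seq1 mul1r; split=> //.
by move=> p [<-|[]]; split=> //; apply: subring1.
Qed.

End Ideals.

Lemma InP (T : eqType) (x : T) (l : seq T) : reflect (List.In x l) (x \in l).
Proof.
elim: l => [|y l IH] /=; first by constructor.
rewrite inE; apply: (iffP orP) => [[/eqP ->|/IH]|[->|/IH]]; by [left|right|rewrite eqxx].
Qed.

Lemma gather_witnesses (A : eqType) (B : Type) (good : B -> Prop)
    (P : A -> seq B -> Prop) (s : seq A) :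
  (forall x, x \in s -> exists2 l, (forall p, List.In p l -> good p) & P x l) ->
  exists2 L, (forall p, List.In p L -> good p) &
    forall x, x \in s -> exists2 l, (forall p, List.In p l -> List.In p L) & P x l.
Proof.
elim: s => [|y s IH] hs; first by exists [::].
have [|L hL hLs] := IH; first by move=> x hx; apply: hs; rewrite inE hx orbT.
have [l hl hy] := hs y (mem_head _ _).
exists (l ++ L); first by move=> p /(List.in_app_or _ _ _) [/hl|/hL].
move=> x; rewrite inE => /orP [/eqP ->|/hLs [l' hl' hx]].
  by exists l => // p hp; apply: List.in_or_app; left.
by exists l' => // p hp; apply: List.in_or_app; right; apply: hl'.
Qed.

Lemma gen_ideal_finite (K : fieldType) (A S : kset K) (s : seq K) :
  subring A -> subset_of S A ->
  (forall x, x \in s -> gen_ideal A S x) ->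
  exists2 t : seq K, (forall y, y \in t -> S y) &
    forall x, x \in s -> gen_ideal A (fun y => y \in t) x.
Proof.
move=> hA hSA hs.
have [|L hL hLs] := @gather_witnesses _ _ (fun p => A p.1 /\ S p.2)
    (fun x l => x = \sum_(p <- l) p.1 * p.2) s.
  by move=> x /hs /(gen_ideal_lincomb hA hSA) [l [hl ->]]; exists l.
have hLA : subset_of (fun y => y \in [seq p.2 | p <- L]) A.
  by move=> _ /mapP [p /InP /hL [_ /hSA ?] ->].
exists [seq p.2 | p <- L]; first by move=> _ /mapP [p /InP /hL [_ ?] ->].
move=> x /hLs [l hl ->].
apply: (lincomb_min (gen_ideal_ideal hA hLA) (fun _ h => h) (@gen_ideal_sub _ A _)).
exists l; split=> // p hp; split; first exact: (proj1 (hL p (hl p hp))).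
by apply/mapP; exists p => //; apply/InP/hl.
Qed.

Section MaximalIdeals.
Variables (K : fieldType) (R : kset K).
Hypothesis hR : subring R.
Implicit Types (I J M P Q : kset K).

Definition avoids_powers I x := forall n, ~ I (x ^+ n).

Lemma ideal_max_avoiding J x : ideal R J -> avoids_powers J x ->
  exists M, [/\ ideal R M, subset_of J M, avoids_powers M x &
    forall B, ideal R B -> subset_of M B -> avoids_powers B x -> subset_of B M].
Proof.
move=> hJ hJx.
pose T := {M | [/\ ideal R M, subset_of J M & avoids_powers M x]}.
pose incl (s t : T) := `[< subset_of (sval s) (sval t) >].
pose t0 : T := exist _ J (And3 hJ (fun _ h => h) hJx).
have [[M [hM hJM hMx]] Mmax] : exists t, premaximal incl t.
  apply: (ZL_preorder t0) => [t|r s t /asboolP hrs /asboolP hst|F Ftot].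
  - by apply/asboolP.
  - by apply/asboolP => z /hrs /hst.
  (* Adding [t0] to the chain makes the union an upper bound also of the empty chain. *)
  pose F0 t := F t \/ t = t0.
  have t0_min (t : T) : subset_of (sval t0) (sval t) by case: (svalP t).
  have F0tot (s t : T) : F0 s -> F0 t ->
      subset_of (sval s) (sval t) \/ subset_of (sval t) (sval s).
    move=> [Fs|->] [Ft|->]; try by [left; apply: t0_min|right; apply: t0_min].
    by case: (Ftot s t Fs Ft) => /asboolP; [left|right].
  pose W z := exists2 t, F0 t & sval t z.
  have W2 z1 z2 : W z1 -> W z2 -> exists2 t, F0 t & sval t z1 /\ sval t z2.
    move=> [s Fs hs] [t Ft ht]; case: (F0tot s t Fs Ft) => [st|ts].
      by exists t => //; split => //; apply: st.
    by exists s => //; split => //; apply: ts.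
  have hW : ideal R W.
    split.
    - by move=> z [t _ hz]; have [ht _ _] := svalP t; apply: ideal_sub ht hz.
    - by exists t0; [right|apply: ideal0 hJ].
    - move=> z1 z2 h1 h2; have [t Ft [hz1 hz2]] := W2 _ _ h1 h2.
      by have [ht _ _] := svalP t; exists t => //; apply: idealD ht hz1 hz2.
    - by move=> a z ha [t Ft hz]; have [ht _ _] := svalP t; exists t => //; apply: idealM ht ha hz.
  have hWx : avoids_powers W x by move=> n [t _]; have [_ _] := svalP t; apply.
  exists (exist _ W (And3 hW (fun z hz => ex_intro2 _ _ t0 (or_intror erefl) hz) hWx)).
  by move=> t Ft; apply/asboolP => z hz; exists t => //; left.
exists M; split=> // B hB hMB hBx.
have hJB : subset_of J B by move=> z /hJM /hMB.
by have /asboolP := Mmax (exist _ B (And3 hB hJB hBx)) (asboolT hMB).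
Qed.

Definition ideal_adjoin M a : kset K := fun z => exists m r, [/\ M m, R r & z = m + r * a].

Lemma ideal_adjoin_ideal M a : ideal R M -> R a -> ideal R (ideal_adjoin M a).
Proof.
move=> hM ha; split.
- move=> _ [m [r [hm hr ->]]]; apply: subringD (ideal_sub hM hm) (subringM hR hr ha) => //.
- by exists 0, 0; rewrite mul0r addr0; split=> //; [apply: ideal0 hM|apply: subring0].
- move=> _ _ [m1 [r1 [h1 hr1 ->]]] [m2 [r2 [h2 hr2 ->]]].
  exists (m1 + m2), (r1 + r2); split; [exact: idealD hM h1 h2|exact: subringD|ring].
- move=> b _ hb [m [r [hm hr ->]]]; exists (b * m), (b * r).
  by split; [exact: idealM hM hb hm|exact: subringM|ring].
Qed.

Lemma ideal_adjoin_sub M a : ideal R M -> subset_of M (ideal_adjoin M a).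
Proof.
by move=> hM m hm; exists m, 0; rewrite mul0r addr0; split=> //; apply: subring0.
Qed.

Lemma ideal_adjoin_mem M a : ideal R M -> ideal_adjoin M a a.
Proof.
by move=> hM; exists 0, 1; rewrite mul1r add0r; split; [apply: ideal0 hM|apply: subring1|].
Qed.

Lemma prime_avoiding J x : ideal R J -> R x -> avoids_powers J x ->
  exists P, [/\ prime_ideal R P, subset_of J P & ~ P x].
Proof.
move=> hJ hx hJx; have [M [hM hJM hMx Mmax]] := ideal_max_avoiding hJ hJx.
exists M; split=> //; last by rewrite -[x]expr1; apply: hMx.
split=> //; first by have := hMx 0%N; rewrite expr0.
have power_adjoin c : R c -> ~ M c -> exists n m r, [/\ M m, R r & x ^+ n = m + r * c].
  move=> hc nc; apply: NNPP => hne; apply: nc.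
  apply: (Mmax _ (ideal_adjoin_ideal hM hc) (ideal_adjoin_sub c hM)); last exact: ideal_adjoin_mem.
  by move=> n [m [r [hm hr e]]]; apply: hne; exists n, m, r.
move=> a b ha hb hab; apply: NNPP => /not_or_and [na nb].
have [n [m1 [r1 [h1 hr1 e1]]]] := power_adjoin a ha na.
have [k [m2 [r2 [h2 hr2 e2]]]] := power_adjoin b hb nb.
apply: (hMx (n + k)%N); rewrite exprD e1 e2.
have -> : (m1 + r1 * a) * (m2 + r2 * b) =
    (m2 + r2 * b) * m1 + (r1 * a) * m2 + (r1 * r2) * (a * b) by ring.
have hm2b : R (m2 + r2 * b) by apply: subringD (ideal_sub hM h2) (subringM hR hr2 hb).
apply: (idealD hM (idealD hM (idealM hM hm2b h1) (idealM hM (subringM hR hr1 ha) h2))).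
exact: idealM hM (subringM hR hr1 hr2) hab.
Qed.

Lemma max_ideal_over J : ideal R J -> ~ J 1 -> exists2 M, max_ideal R M & subset_of J M.
Proof.
move=> hJ hJ1; have [|M [hM hJM hM1 Mmax]] := ideal_max_avoiding hJ (x := 1).
  by move=> n; rewrite expr1n.
exists M => //; split=> //; first by have := hM1 0%N; rewrite expr0.
by move=> B hB hMB hB1; apply: Mmax => // n; rewrite expr1n.
Qed.

Lemma max_ideal_comax M a : max_ideal R M -> R a -> ~ M a ->
  exists m r, [/\ M m, R r & m + r * a = 1].
Proof.
move=> [hM hM1 Mmax] ha na; apply: NNPP => hne; apply: na.
apply: (Mmax _ (ideal_adjoin_ideal hM ha) (ideal_adjoin_sub a hM)); last exact: ideal_adjoin_mem.
by move=> [m [r [hm hr e]]]; apply: hne; exists m, r.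
Qed.

Lemma max_ideal_prime M : max_ideal R M -> prime_ideal R M.
Proof.
move=> hMmax; have [hM hM1 _] := hMmax; split=> // a b ha hb hab.
case: (classic (M a)) => [|na]; [by left|right].
have [m [r [hm hr e]]] := max_ideal_comax hMmax ha na.
have -> : b = b * m + r * (a * b) by rewrite -[LHS]mulr1 -e; ring.
exact: idealD hM (idealM hM hb hm) (idealM hM hr hab).
Qed.

Lemma prime_idealX Q x n : prime_ideal R Q -> R x -> ~ Q x -> ~ Q (x ^+ n).
Proof.
move=> [_ hQ1 hQ] hx nx; elim: n => [|n IH]; first by rewrite expr0.
by rewrite exprS => /(hQ _ _ hx (subringX n hR hx)) [].
Qed.

Lemma prime_ideal0 Q : prime_ideal R Q -> Q 0.
Proof. by case=> hQ _ _; apply: ideal0 hQ. Qed.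

End MaximalIdeals.

Section Localization.
Variables (K : fieldType) (R : kset K).
Hypothesis hR : subring R.
Implicit Types (C : kset K -> Prop) (P Q : kset K).

Lemma prime_ideal_neq0 Q b : prime_ideal R Q -> ~ Q b -> b != 0.
Proof. by move=> hQ nb; apply/eqP => b0; apply: nb; rewrite b0; apply: prime_ideal0 hQ. Qed.

Lemma mem_loc Q x : prime_ideal R Q -> R x -> loc R Q x.
Proof.
by move=> [_ hQ1 _] hx; exists x, 1; rewrite divr1; split=> //; apply: subring1.
Qed.

Lemma loc_subring Q : prime_ideal R Q -> subring (loc R Q).
Proof.
move=> hQ; have [_ _ Qprime] := hQ.
split; [exact: mem_loc (subring0 hR)|exact: mem_loc (subring1 hR)| |].
- move=> _ _ [a [b [ha hb nb ->]]] [c [d [hc hd nd ->]]].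
  exists (a * d - c * b), (b * d); split.
  + by apply: (subringB hR); apply: (subringM hR).
  + exact: (subringM hR).
  + by case/(Qprime _ _ hb hd).
  + by field; rewrite !(prime_ideal_neq0 hQ).
- move=> _ _ [a [b [ha hb nb ->]]] [c [d [hc hd nd ->]]].
  exists (a * c), (b * d); split; [exact: (subringM hR)|exact: (subringM hR)| |].
  + by case/(Qprime _ _ hb hd).
  + by field; rewrite !(prime_ideal_neq0 hQ).
Qed.

Lemma Tof_subring C : (forall Q, C Q -> prime_ideal R Q) -> subring (Tof R C).
Proof.
move=> hC; have hCQ Q : C Q -> subring (loc R Q) by move/hC/loc_subring.
split=> [Q /hCQ/subring0|Q /hCQ/subring1|x y hx hy Q CQ|x y hx hy Q CQ] //.
- exact: subringB (hCQ Q CQ) (hx Q CQ) (hy Q CQ).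
- exact: subringM (hCQ Q CQ) (hx Q CQ) (hy Q CQ).
Qed.

Lemma mem_Tof C x : (forall Q, C Q -> prime_ideal R Q) -> R x -> Tof R C x.
Proof. by move=> hC hx Q /hC hQ; apply: mem_loc. Qed.

Lemma loc_common_denominator Q (s : seq K) : prime_ideal R Q ->
  (forall x, x \in s -> loc R Q x) -> exists d, [/\ R d, ~ Q d & forall x, x \in s -> R (d * x)].
Proof.
move=> hQ; have [_ _ Qprime] := hQ; elim: s => [|y s IH] hs.
  by exists 1; split=> //; [apply: subring1|case: hQ].
have [|d [hd nd hds]] := IH; first by move=> x hx; apply: hs; rewrite inE hx orbT.
have [a [b [ha hb nb ->]]] := hs y (mem_head _ _).
exists (d * b); split; [exact: (subringM hR)|by case/(Qprime _ _ hd hb)|].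
move=> x; rewrite inE => /orP [/eqP ->|hx].
  by rewrite -mulrA [b * _]mulrC divfK ?(prime_ideal_neq0 hQ nb) //; apply: (subringM hR).
by rewrite mulrAC; apply: (subringM hR (hds x hx) hb).
Qed.


(* The body of [DVR]: [had hP] unpacks to some [v] with [dvaluation (loc R P) v]. *)
Definition dvaluation (V : kset K) (v : K -> int) :=
  [/\ (forall x y, x != 0 -> y != 0 -> v (x * y) = v x + v y),
      (forall x y, x != 0 -> y != 0 -> x + y != 0 ->
                   Num.min (v x) (v y) <= v (x + y)),
      (forall n : int, exists x, x != 0 /\ v x = n) &
      (forall x, V x <-> (x = 0 \/ (x != 0 /\ 0 <= v x)))].

Section Valuation.
Variables (P : kset K) (v : K -> int).
Hypotheses (hP : prime_ideal R P) (hv : dvaluation (loc R P) v).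

Lemma valM x y : x != 0 -> y != 0 -> v (x * y) = v x + v y.
Proof. by case: hv => + _ _ _; apply. Qed.

Lemma val1 : v 1 = 0.
Proof.
have := valM (oner_neq0 K) (oner_neq0 K); rewrite mulr1 => v11.
by apply: (addrI (v 1)); rewrite addr0 -v11.
Qed.

Lemma valV x : x != 0 -> v x^-1 = - v x.
Proof.
move=> x0; have := valM x0 (invr_neq0 x0); rewrite mulfV // val1 => vxV.
by apply/eqP; rewrite -addr_eq0 addrC -vxV.
Qed.

Lemma valD_gt0 x y : x != 0 -> y != 0 -> x + y != 0 -> 0 < v x -> 0 < v y -> 0 < v (x + y).
Proof.
case: hv => _ vmin _ _ x0 y0 xy0 vx vy.
by apply: lt_le_trans (vmin _ _ x0 y0 xy0); rewrite lt_min vx vy.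
Qed.

Lemma loc_val_ge0 x : x != 0 -> loc R P x -> 0 <= v x.
Proof. by case: hv => _ _ _ -> x0 [x_0|[]] //; rewrite x_0 eqxx in x0. Qed.

Lemma val_ge0_loc x : 0 <= v x -> loc R P x.
Proof. by case: hv => _ _ _ -> vx; case: (eqVneq x 0); [left|right]. Qed.

Lemma val_ge0 x : R x -> x != 0 -> 0 <= v x.
Proof. by move=> hx x0; apply: loc_val_ge0 (mem_loc hP hx). Qed.

Lemma val_unit b : R b -> ~ P b -> v b = 0.
Proof.
move=> hb nb; have b0 := prime_ideal_neq0 hP nb.
have : loc R P b^-1 by exists 1, b; rewrite div1r; split=> //; apply: subring1.
move/(loc_val_ge0 (invr_neq0 b0)); rewrite valV // oppr_ge0 => vb.
by apply/eqP; rewrite eq_le vb val_ge0.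
Qed.

Lemma prime_ideal_val_gt0 a : R a -> a != 0 -> P a <-> 0 < v a.
Proof.
move=> ha a0; split=> [Pa|va]; last by apply: NNPP => na; rewrite val_unit in va.
rewrite lt_def val_ge0 // andbT; apply/eqP => va.
have [c [d [hc hd nd e]]] : loc R P a^-1 by apply: val_ge0_loc; rewrite valV // va.
have d0 := prime_ideal_neq0 hP nd.
apply: nd; have -> : d = c * a by rewrite -[d]mul1r -(mulVf a0) e; field.
by have [hPi _ _] := hP; apply: idealM hPi hc Pa.
Qed.

Lemma prime_ideal_nonzero : exists2 p, P p & p != 0.
Proof.
have [_ _ vsurj _] := hv; have [y [y0 vy]] := vsurj 1.
have [a [b [ha hb nb e]]] : loc R P y by apply: val_ge0_loc; rewrite vy.
have b0 := prime_ideal_neq0 hP nb.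
have ea : a = y * b by rewrite e mulfVK.
have a0 : a != 0 by rewrite ea mulf_neq0.
exists a => //; apply/(prime_ideal_val_gt0 ha a0).
by rewrite ea valM // vy val_unit.
Qed.

End Valuation.
End Localization.

Lemma exists_min_val (K : fieldType) (f : K -> int) (s : seq K) :
  (exists2 x, x \in s & x != 0) ->
  exists xj, [/\ xj \in s, xj != 0 & forall x, x \in s -> x != 0 -> f xj <= f x].
Proof.
elim: s => [[x //]|y s IH] hys.
have [[xj [hxj xj0 xjmin]]|nos] := classic (exists xj, [/\ xj \in s, xj != 0 &
    forall x, x \in s -> x != 0 -> f xj <= f x]).
  case: (boolP ((y != 0) && (f y < f xj))) => [/andP [y0 lt_y]|].
    exists y; split; rewrite ?mem_head // => x; rewrite inE => /orP [/eqP -> //|hx x0].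
    exact/ltW/(lt_le_trans lt_y (xjmin x hx x0)).
  rewrite negb_and negbK -leNgt => le_xj.
  exists xj; split; rewrite ?inE ?hxj ?orbT // => x.
  rewrite inE => /orP [/eqP -> y0|]; last exact: xjmin.
  by move: le_xj; rewrite (negbTE y0).
have s0 x : x \in s -> x = 0.
  by move=> hx; apply: NNPP => /eqP x0; apply: nos; apply: IH; exists x.
have y0 : y != 0 by case: hys => x; rewrite inE => /orP [/eqP -> //|/s0 ->]; rewrite eqxx.
exists y; split; rewrite ?mem_head // => x; rewrite inE => /orP [/eqP -> //|/s0 ->].
by rewrite eqxx.
Qed.

Section Separation.
Variables (K : fieldType) (R : kset K).
Implicit Types (C : kset K -> Prop).

Definition max_family C := forall Q, C Q -> max_ideal R Q.

Definition separated C := forall P, max_ideal R P -> ~ C P ->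
  exists s : seq K, [/\ (forall x, x \in s -> P x), (exists2 x, x \in s & x != 0) &
    forall Q, C Q -> exists2 x, x \in s & ~ Q x].

End Separation.

Section AlmostDedekind.
Variables (K : fieldType) (R : kset K).
Hypotheses (hR : subring R) (had : almost_dedekind R).
Implicit Types (C : kset K -> Prop) (P Q T : kset K).

Lemma max_family_prime C : max_family R C -> forall Q, C Q -> prime_ideal R Q.
Proof. by move=> hC Q /hC /(max_ideal_prime hR). Qed.

Definition colon (s : seq K) : kset K := fun h => forall x, x \in s -> R (h * x).

Lemma fg_ideal_invertible (s : seq K) : (forall x, x \in s -> R x) ->
  (exists2 x, x \in s & x != 0) -> lincomb (colon s) (fun x => x \in s) 1.
Proof.
(* Otherwise s (R : s) lies in a maximal M; dividing by an element of s of least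
   M-value and clearing denominators at M gives an element of s (R : s) outside M. *)
move=> hsR hs0; apply: NNPP => n1.
have hJ : ideal R (lincomb (colon s) (fun x => x \in s)).
  apply: lincomb_ideal => // [a h ha hh x hx|h x hh]; last exact: hh.
  by rewrite -mulrA; apply: (subringM hR ha (hh x hx)).
have [M hM hJM] := max_ideal_over hJ n1.
have hMp := max_ideal_prime hR hM; have [v hv] := had hM.
have [xj [hxj xj0 xjmin]] := exists_min_val v hs0.
have [|d [hd nd hds]] := loc_common_denominator hR (s := [seq x / xj | x <- s]) hMp.
  move=> _ /mapP [x hx ->]; case: (eqVneq x 0) => [->|x0].
    by rewrite mul0r; apply: mem_loc (subring0 hR).
  by apply: (val_ge0_loc hv); rewrite (valM hv) ?invr_neq0 // (valV hv) // subr_ge0 xjmin.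
apply: nd; apply: hJM; exists [:: (d / xj, xj)]; rewrite big_seq1 /= divfK //; split=> //.
move=> _ [<-|[]] /=; split=> // x hx.
by rewrite mulrAC -mulrA; apply: hds; apply/mapP; exists x.
Qed.

Lemma colon_Tof C (s : seq K) h : max_family R C -> (forall x, x \in s -> R x) ->
  (forall Q, C Q -> exists2 x, x \in s & ~ Q x) -> colon s h -> Tof R C h.
Proof.
move=> hC hsR hsep hh Q CQ; have hQ := hC Q CQ; have hQp := max_ideal_prime hR hQ.
have [x hx nx] := hsep Q CQ; have [v hv] := had hQ.
have x0 := prime_ideal_neq0 hQp nx.
have [->|h0] := eqVneq h 0; first exact: mem_loc (subring0 hR).
apply: (val_ge0_loc hv); have := val_ge0 hR hQp hv (hh x hx) (mulf_neq0 h0 x0).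
by rewrite (valM hv) // (val_unit hR hQp hv (hsR x hx) nx) addr0.
Qed.

Lemma separating_gen_Tof C (s : seq K) : max_family R C ->
  (forall x, x \in s -> R x) -> (exists2 x, x \in s & x != 0) ->
  (forall Q, C Q -> exists2 x, x \in s & ~ Q x) ->
  gen_ideal (Tof R C) (fun x => x \in s) 1.
Proof.
move=> hC hsR hs0 hsep; have hT := Tof_subring hR (max_family_prime hC).
have hsT : subset_of (fun x => x \in s) (Tof R C).
  by move=> x /hsR; apply: mem_Tof (max_family_prime hC).
apply: (lincomb_min (gen_ideal_ideal hT hsT) _ (@gen_ideal_sub _ _ _)
  (fg_ideal_invertible hsR hs0)).
by move=> h; apply: colon_Tof.
Qed.

Lemma ext_ideal_Tof_unit C P : max_family R C -> separated R C ->
  max_ideal R P -> ~ C P -> ext_ideal P (Tof R C) 1.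
Proof.
move=> hC hsepC hP nCP; have [s [hsP hs0 hsep]] := hsepC P hP nCP.
have [hPi _ _] := hP; have hsR x : x \in s -> R x by move/hsP/(ideal_sub hPi).
have hT := Tof_subring hR (max_family_prime hC).
have hPT : subset_of P (Tof R C).
  by move=> x /(ideal_sub hPi); apply: mem_Tof (max_family_prime hC).
by apply: (gen_idealS hT hPT hsP); apply: (separating_gen_Tof hC hsR hs0 hsep).
Qed.

End AlmostDedekind.

Section ExtensionToOverring.
Variables (K : fieldType) (R P T : kset K).
Hypotheses (hR : subring R) (had : almost_dedekind R) (hP : max_ideal R P).
Hypotheses (hT : subring T) (hRT : subset_of R T) (hTP : subset_of T (loc R P)).

Let hPi : ideal R P. Proof. by case: hP. Qed.
Let hPp : prime_ideal R P. Proof. exact: max_ideal_prime. Qed.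
Let hPT : subset_of P T. Proof. by move=> x /(ideal_sub hPi) /hRT. Qed.
Let hPTi : ideal T (ext_ideal P T). Proof. exact: gen_ideal_ideal. Qed.

Lemma ext_ideal_val_gt0 v z : dvaluation (loc R P) v ->
  ext_ideal P T z -> z != 0 -> 0 < v z.
Proof.
move=> hv; pose I z := T z /\ (z != 0 -> 0 < v z); suff hI : ideal T I.
  move/(gen_ideal_min hI) => hz; apply: (proj2 (hz _)) => p hp; split; first exact: hPT.
  by move=> p0; apply/(prime_ideal_val_gt0 hR hPp hv (ideal_sub hPi hp) p0).
split=> [x []//| | x y [hx vx] [hy vy] | a x ha [hx vx]].
- by split; [apply: subring0|rewrite eqxx].
- split=> [|xy0]; first exact: subringD.
  have [x0|x0] := eqVneq x 0; first by rewrite x0 add0r in xy0 *; apply: vy.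
  have [y0|y0] := eqVneq y 0; first by rewrite y0 addr0 in xy0 *; apply: vx.
  exact: (valD_gt0 hv x0 y0 xy0 (vx x0) (vy y0)).
- split=> [|ax0]; first exact: subringM.
  have [a0 x0] : a != 0 /\ x != 0 by apply/andP; rewrite -negb_or -mulf_eq0.
  rewrite (valM hv) //; apply: ltr_wpDl (vx x0).
  exact: (loc_val_ge0 hv a0 (hTP ha)).
Qed.

Lemma ext_ideal_proper : ~ ext_ideal P T 1.
Proof.
have [v hv] := had hP.
by move/(ext_ideal_val_gt0 hv)/(_ (oner_neq0 K)); rewrite (val1 hv) ltxx.
Qed.

Lemma ext_ideal_contract z : ext_ideal P T z -> R z -> P z.
Proof.
have [v hv] := had hP; move=> hz hRz.
have [->|z0] := eqVneq z 0; first exact: ideal0 hPi.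
exact/(prime_ideal_val_gt0 hR hPp hv hRz z0)/(ext_ideal_val_gt0 hv hz).
Qed.

Hypothesis hqf : quotient_field R.

Lemma val_gt0_ext_ideal v y : dvaluation (loc R P) v ->
  T y -> y != 0 -> 0 < v y -> ext_ideal P T y.
Proof.
(* Write y = a / b and 1 = sum h_i x_i with x_i in {a, b} and h_i a, h_i b in R:
   h_i a = y h_i b has positive value, so it lies in P, and y = sum y h_i x_i. *)
move=> hv hy y0 vy; have [a [b [ha hb b0 e]]] := hqf y.
have hsR x : x \in [:: a; b] -> R x by rewrite !inE => /orP [] /eqP ->.
have [|l [hl e1]] := fg_ideal_invertible hR had hsR; first by exists b; rewrite ?inE ?eqxx ?orbT.
rewrite -[y]mulr1 e1 big_distrr; apply: (ideal_sum hPTi) => p /hl [hcolon hp2] /=.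
have ha' : R (p.1 * a) by apply: hcolon; rewrite inE eqxx.
have hb' : R (p.1 * b) by apply: hcolon; rewrite !inE eqxx orbT.
have Pa' : P (p.1 * a).
  have [->|a'0] := eqVneq (p.1 * a) 0; first exact: ideal0 hPi.
  have p10 : p.1 != 0 by apply: contraNneq a'0 => ->; rewrite mul0r.
  apply/(prime_ideal_val_gt0 hR hPp hv ha' a'0).
  have -> : p.1 * a = y * (p.1 * b) by rewrite e; field.
  rewrite (valM hv) ?mulf_neq0 //; apply: ltr_pwDl vy _.
  exact: (val_ge0 hR hPp hv hb' (mulf_neq0 p10 b0)).
move: hp2; rewrite !inE => /orP [] /eqP ->.
  exact: (idealM hPTi hy (gen_ideal_sub Pa')).
have -> : y * (p.1 * b) = p.1 * a by rewrite e; field.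
exact: (gen_ideal_sub Pa').
Qed.

Lemma ext_ideal_max : max_ideal T (ext_ideal P T).
Proof.
have [v hv] := had hP; split=> //; first exact: ext_ideal_proper.
move=> J hJ hPJ nJ y hy; have hTy := ideal_sub hJ hy.
have [->|y0] := eqVneq y 0; first exact: ideal0 hPTi.
have vy0 := loc_val_ge0 hv y0 (hTP hTy).
have [vy|] := boolP (0 < v y); first exact: val_gt0_ext_ideal hv hTy y0 vy.
(* Now y = a / b is a unit of R_P with a outside P, and 1 = m + r a = m + (r b) y. *)
rewrite lt_def vy0 andbT negbK => /eqP vy.
have [a [b [ha hb nb e]]] := hTP hTy.
have b0 := prime_ideal_neq0 hPp nb.
have ea : a = y * b by rewrite e mulfVK.
have na : ~ P a.
  have a0 : a != 0 by rewrite ea mulf_neq0.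
  move/(prime_ideal_val_gt0 hR hPp hv ha a0).
  by rewrite ea (valM hv) // vy (val_unit hR hPp hv hb nb) addr0 ltxx.
case: nJ; have [m [r [hm hr <-]]] := max_ideal_comax hR hP ha na.
apply: (idealD hJ); first exact: (hPJ _ (gen_ideal_sub hm)).
have -> : r * a = (r * b) * y by rewrite ea; ring.
exact: (idealM hJ (hRT (subringM hR hr hb)) hy).
Qed.

End ExtensionToOverring.

Section InverseTopology.
Variables (K : fieldType) (R : kset K).
Hypothesis hR : subring R.
Implicit Types (C : kset K -> Prop) (Q : kset K) (s : seq K).

Definition basic_open s Q := prime_ideal R Q /\ ~ subset_of (gen_ideal R (fun x => x \in s)) Q.

Lemma gen_ideal_not_sub Q s : ideal R Q ->
  ~ subset_of (gen_ideal R (fun x => x \in s)) Q <-> exists2 x, x \in s & ~ Q x.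
Proof.
move=> hQ; split=> [nsub|[x hx nx] sub]; last by apply: nx; apply: sub; apply: gen_ideal_sub.
apply: NNPP => nex; apply/nsub/(gen_ideal_min hQ) => x hx.
by apply: NNPP => nx; apply: nex; exists x.
Qed.

Lemma basic_open_open s : (forall x, x \in s -> R x) -> zar_open R (basic_open s).
Proof.
by move=> hsR; exists (gen_ideal R (fun x => x \in s)); split=> //; apply: gen_ideal_ideal.
Qed.

Section BasicOpenCover.
Variables (s : seq K) (Idx : Type) (F : Idx -> kset K -> Prop).
Hypotheses (hsR : forall x, x \in s -> R x) (hF : forall i, zar_open R (F i)).
Hypothesis hcov : forall Q, basic_open s Q -> exists i, F i Q.

(* [D(p.2)] is contained in [F p.1]; carrying the index avoids choosing an ideal
   for each open [F i]. *)
Definition cover_elt (p : Idx * K) :=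
  R p.2 /\ forall Q, prime_ideal R Q -> ~ Q p.2 -> F p.1 Q.

Definition cover_sums : kset K := fun z => exists l : seq (Idx * K),
  (forall p, List.In p l -> cover_elt p) /\ z = \sum_(p <- l) p.2.

Lemma cover_sums_ideal : ideal R cover_sums.
Proof.
split=> [_ [l [hl ->]]||_ _ [l1 [h1 ->]] [l2 [h2 ->]]|a _ ha [l [hl ->]]].
- by apply: subring_sum => // p /hl [].
- by exists [::]; rewrite big_nil.
- exists (l1 ++ l2); rewrite big_cat; split=> //.
  by move=> p /(List.in_app_or _ _ _) [/h1|/h2].
- exists [seq (p.1, a * p.2) | p <- l]; rewrite big_map big_distrr; split=> //.
  move=> q /(List.in_map_iff _ _ _) [p [<- /hl [hp1 hp2]]].
  split=> [|Q hQ nQ]; first exact: subringM.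
  by apply: hp2 => // hp; apply: nQ; have [hQi _ _] := hQ; apply: idealM hQi ha hp.
Qed.

Lemma cover_sums_expr x : x \in s -> exists n, cover_sums (x ^+ n).
Proof.
(* Otherwise some prime P containing [cover_sums] avoids x; P lies in some F i = D(I),
   and any y in I outside P makes (i, y) a cover element outside P. *)
move=> hx; apply: NNPP => nx.
have [|P [hP hGP nPx]] := prime_avoiding hR cover_sums_ideal (hsR hx).
  by move=> n hn; apply: nx; exists n.
have [hPi _ _] := hP.
have [i Fi] : exists i, F i P.
  by apply: hcov; split=> //; apply/(gen_ideal_not_sub _ hPi); exists x.
have [I [hI FiE]] := hF i; have [_ nIP] := proj1 (FiE P) Fi.
have [y Iy nPy] : exists2 y, I y & ~ P y.
  by apply: NNPP => ne; apply: nIP => y Iy; apply: NNPP => nPy; apply: ne; exists y.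
apply/nPy/hGP; exists [:: (i, y)]; rewrite big_seq1; split=> // _ [<-|[]].
split=> [|Q hQ nQ]; first exact: ideal_sub hI Iy.
by apply/FiE; split=> // sub; apply/nQ/sub.
Qed.

End BasicOpenCover.

(* [zar_compact] asks for a function [nat -> Idx], so a point [Q0] of [D(s)] is
   needed to supply a default index. *)
Lemma basic_open_compact s Q0 : (forall x, x \in s -> R x) -> basic_open s Q0 ->
  zar_compact R (basic_open s).
Proof.
move=> hsR DQ0 Idx F hF hcov; have [i0 _] := hcov Q0 DQ0.
have [|L hL hLs] := @gather_witnesses _ _ (cover_elt F)
    (fun x l => exists n, x ^+ n = \sum_(p <- l) p.2) s.
  by move=> x /(cover_sums_expr hsR hF hcov) [n [l [hl e]]]; exists l => //; exists n.
exists (size L), (fun k => (List.nth k L (i0, 0)).1) => Q [hQ nQ]; have [hQi _ _] := hQ.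
have [x hx nx] := proj1 (gen_ideal_not_sub _ hQi) nQ.
have [l hlL [n e]] := hLs x hx.
have [p hpl nQp] : exists2 p, List.In p l & ~ Q p.2.
  apply: NNPP => ne; apply: (prime_idealX hR (n := n) hQ (hsR x hx) nx); rewrite e.
  by apply: (ideal_sum hQi) => p hp; apply: NNPP => nQp; apply: ne; exists p.
have [k [hk ek]] := List.In_nth L p (i0, 0) (hlL p hpl).
exists k; split; first exact/ssrnat.ltP.
by rewrite ek; have [_] := hL p (hlL p hpl); apply.
Qed.

Lemma closed_in_Max_separated C : max_family R C -> separated R C -> closed_in_Max R C.
Proof.
move=> hC hsepC; have [[Q0 CQ0]|noC] := classic (exists Q0, C Q0); last first.
  exists (fun _ => False); split=> [Cl _ ? _ _ //|P]; split=> [CP|[]//].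
  by case: noC; exists P.
pose Idx := {s : seq K | (forall x, x \in s -> R x) /\ forall Q, C Q -> exists2 x, x \in s & ~ Q x}.
have DC (i : Idx) Q : C Q -> basic_open (sval i) Q.
  move=> CQ; have [_ hsep] := svalP i; have hQ := hC Q CQ; have [hQi _ _] := hQ.
  by split; [apply: max_ideal_prime|apply/(gen_ideal_not_sub _ hQi)/hsep].
exists (fun P => prime_ideal R P /\ forall i : Idx, basic_open (sval i) P).
split=> [Cl hU _ _ hI|P].
  apply: (hI Idx (fun i => basic_open (sval i))) => i; have [hsR _] := svalP i.
  exact: hU (basic_open_open hsR) (basic_open_compact hsR (DC i Q0 CQ0)).
split=> [CP|[hP [_ hX]]].
  by have hP := hC P CP; split=> //; split=> [|i]; [apply: max_ideal_prime|apply: DC].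
apply: NNPP => nCP; have [s [hsP hs0 hsep]] := hsepC P hP nCP.
have [hPi _ _] := hP; have hsR x : x \in s -> R x by move/hsP/(ideal_sub hPi).
have [_ nsub] := hX (exist _ s (conj hsR hsep)).
by apply: nsub; apply: (gen_ideal_min hPi).
Qed.

End InverseTopology.

Lemma not_critical_witness (K : fieldType) (A M : kset K) : max_ideal A M -> ~ critical A M ->
  exists s : seq K, [/\ forall x, x \in s -> A x,
    subset_of (gen_ideal A (fun x => x \in s)) M &
    forall N, max_ideal A N -> ~ subset_of (gen_ideal A (fun x => x \in s)) (sq_ideal A N)].
Proof.
move=> hM ncrit; apply: NNPP => nex; apply: ncrit; split=> // s hsA hsM.
apply: NNPP => nN; apply: nex; exists s; split=> // N hN hsN.
by apply: nN; exists N.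
Qed.

Section CriticalSets.
Variables (K : fieldType) (R : kset K).
Hypotheses (hR : subring R) (hqf : quotient_field R) (had : almost_dedekind R).
Variables (O : Type) (lt : O -> O -> Prop) (wf : well_founded lt).
Hypothesis lt_total : forall a b, lt a b \/ a = b \/ lt b a.
Implicit Types (a b g : O) (P Q : kset K).

Lemma CritE a P : Crit wf R a P <-> @crit_step K O lt R a (fun b _ => Crit wf R b) P.
Proof.
rewrite /Crit Fix_eq // => x f g fg.
by have -> : f = g by do 2![apply: functional_extensionality_dep => ?]; apply: fg.
Qed.

Lemma is_succ_uniq g g' a : is_succ lt g a -> is_succ lt g' a -> g = g'.
Proof.
move=> [gla gmax] [g'la g'max].
by case: (lt_total g g') => [/gmax/(_ g'la) []|[//|/g'max/(_ gla) []]].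
Qed.

Lemma Crit_min a P : (forall b, ~ lt b a) -> Crit wf R a P <-> max_ideal R P.
Proof.
move=> amin; rewrite CritE; split=> [|hP]; last by left.
by case=> [[_ //]|[[g [h _]]|[[b hb] _ _]]]; [case: (amin g)|case: (amin b)].
Qed.

Lemma Crit_succ g a P : is_succ lt g a -> Crit wf R a P <->
  max_ideal R P /\ critical (Tal wf R g) (ext_ideal P (Tal wf R g)).
Proof.
move=> gsa; rewrite CritE; split=> [|[hP crit]]; last by right; left; exists g, gsa.1.
case=> [[amin _]|[[g' [_ [g'sa hP crit]]]|[_ nsucc _]]].
- by case: (amin g gsa.1).
- by rewrite (is_succ_uniq gsa g'sa).
- by case: (nsucc g).
Qed.

Lemma Crit_limit a P : (exists b, lt b a) -> (forall g, ~ is_succ lt g a) ->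
  Crit wf R a P <-> forall b, lt b a -> Crit wf R b P.
Proof.
move=> [b0 hb0] nsucc; rewrite CritE; split=> [|hall]; last by right; right; split=> //; exists b0.
case=> [[amin _]|[[g [_ [gsa _ _]]]|[_ _ hall]]] //; [by case: (amin b0)|by case: (nsucc g)].
Qed.

Lemma Crit_max_family a : (forall b, lt b a -> max_family R (Crit wf R b)) ->
  max_family R (Crit wf R a).
Proof.
move=> IH P /CritE [[_ hP]|[[g [_ [_ hP _]]]|[[b hb] _ hall]]] //.
exact: IH b hb P (hall b hb).
Qed.

Lemma Tal_subring a : max_family R (Crit wf R a) -> subring (Tal wf R a).
Proof. by move/(max_family_prime hR)/(Tof_subring hR). Qed.

Lemma sub_Tal a : max_family R (Crit wf R a) -> subset_of R (Tal wf R a).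
Proof. by move/(max_family_prime hR) => hC x; apply: mem_Tof. Qed.

Lemma Crit_succ_sub g a Q : is_succ lt g a -> max_family R (Crit wf R g) ->
  separated R (Crit wf R g) -> Crit wf R a Q -> Crit wf R g Q.
Proof.
move=> gsa hmax hsep /(Crit_succ _ gsa) [hQ [[_ nQT1 _] _]].
by apply: NNPP => nCQ; apply: nQT1; apply: (ext_ideal_Tof_unit hR had hmax hsep hQ nCQ).
Qed.

Lemma separated_succ g a : is_succ lt g a -> max_family R (Crit wf R g) ->
  separated R (Crit wf R g) -> separated R (Crit wf R a).
Proof.
move=> gsa hmax hsep P hP nCaP; have Ca_g := Crit_succ_sub gsa hmax hsep.
have [CgP|nCgP] := classic (Crit wf R g P); last first.
  have [s [hsP hs0 hsepQ]] := hsep P hP nCgP.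
  by exists s; split=> // Q /Ca_g; apply: hsepQ.
have hT := Tal_subring hmax; have hRT := sub_Tal hmax.
have hTP : subset_of (Tal wf R g) (loc R P) by move=> x; apply.
have [hPi _ _] := hP; have hPT : subset_of P (Tal wf R g) by move=> x /(ideal_sub hPi)/hRT.
have [|s [hsT hsP hsN]] := not_critical_witness (ext_ideal_max hR had hP hT hRT hTP hqf).
  by move=> crit; apply: nCaP; apply/(Crit_succ _ gsa).
have [t htP hst] := gen_ideal_finite hT hPT
  (fun x hx => hsP x (@gen_ideal_sub _ _ (fun y => y \in s) x hx)).
have [v hv] := had hP; have [p0 Pp0 p00] := prime_ideal_nonzero hR (max_ideal_prime hR hP) hv.
exists (p0 :: t); split=> [x|| Q CaQ]; first by rewrite inE => /orP [/eqP -> //|/htP].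
  by exists p0; rewrite ?mem_head.
apply: NNPP => nex; have htQ x : x \in p0 :: t -> Q x.
  by move=> hx; apply: NNPP => nQx; apply: nex; exists x.
have [hQ [_ crit]] := proj1 (Crit_succ Q gsa) CaQ; have [hQi _ _] := hQ.
have hQT : subset_of Q (Tal wf R g) by move=> x /(ideal_sub hQi)/hRT.
have [|N [hN hsN2]] := crit s hsT.
  apply: (gen_ideal_min (gen_ideal_ideal hT hQT)) => x /hst.
  by apply: gen_idealS => // y hy; apply: htQ; rewrite inE hy orbT.
exact: hsN N hN hsN2.
Qed.

Lemma separated_limit a : (exists b, lt b a) -> (forall g, ~ is_succ lt g a) ->
  (forall b, lt b a -> separated R (Crit wf R b)) -> separated R (Crit wf R a).
Proof.
move=> hpred nsucc IH P hP nCaP.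
have [b hb nCbP] : exists2 b, lt b a & ~ Crit wf R b P.
  apply: NNPP => nex; apply/nCaP/(Crit_limit _ hpred nsucc) => b hb.
  by apply: NNPP => nCbP; apply: nex; exists b.
have [s [hsP hs0 hsep]] := IH b hb P hP nCbP.
by exists s; split=> // Q /(Crit_limit _ hpred nsucc)/(_ b hb); apply: hsep.
Qed.

Lemma Crit_max_separated a : max_family R (Crit wf R a) /\ separated R (Crit wf R a).
Proof.
elim/(well_founded_induction wf): a => a IH.
split=> [|]; first exact: Crit_max_family (fun b hb => (IH b hb).1).
have [[g gsa]|nsucc] := classic (exists g, is_succ lt g a).
  by have [] := IH g gsa.1; apply: separated_succ.
have [hpred|nopred] := classic (exists b, lt b a).
  apply: separated_limit => // [g gsa|b hb]; [by apply: nsucc; exists g|exact: (IH b hb).2].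
by move=> P hP []; apply/Crit_min => // b hb; apply: nopred; exists b.
Qed.

Lemma ext_ideal_Tal_unit a P : max_ideal R P ->
  ext_ideal P (Tal wf R a) 1 <-> ~ Crit wf R a P.
Proof.
have [hmax hsep] := Crit_max_separated a.
move=> hP; split=> [PT1 CP|]; last exact: (ext_ideal_Tof_unit hR had hmax hsep hP).
have hTP : subset_of (Tal wf R a) (loc R P) by move=> x; apply.
exact: (ext_ideal_proper hR had hP (Tal_subring hmax) (sub_Tal hmax) hTP PT1).
Qed.

Lemma Crit_ext_ideal_max a P : Crit wf R a P ->
  max_ideal (Tal wf R a) (ext_ideal P (Tal wf R a)) /\
  forall x, P x <-> ext_ideal P (Tal wf R a) x /\ R x.
Proof.
have [hmax _] := Crit_max_separated a.
move=> CP; have hP := hmax P CP; have [hPi _ _] := hP.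
have hT := Tal_subring hmax; have hRT := sub_Tal hmax.
have hTP : subset_of (Tal wf R a) (loc R P) by move=> x; apply.
split=> [|x]; first exact: (ext_ideal_max hR had hP hT hRT hTP hqf).
split=> [Px|[PTx Rx]]; first by split; [apply: gen_ideal_sub|apply: ideal_sub hPi Px].
exact: (ext_ideal_contract hR had hP hT hRT hTP PTx Rx).
Qed.

End CriticalSets.

Theorem lemma5p3 (K : fieldType) (R : K -> Prop)
  (O : Type) (lt : O -> O -> Prop) (wf : well_founded lt)
  (lt_trans : forall a b c, lt a b -> lt b c -> lt a c)
  (lt_total : forall a b, lt a b \/ a = b \/ lt b a)
  (alpha : O) :
  subring R -> quotient_field R -> almost_dedekind R ->
  (* (a) *)
  (forall P, max_ideal R P ->
     (~ (forall x, ext_ideal P (Tal wf R alpha) x <-> Tal wf R alpha x)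
      <-> Crit wf R alpha P)) /\
  (* (b) *)
  (forall P, Crit wf R alpha P -> max_ideal R P) /\
  (forall P, max_ideal R P ->
     (Crit wf R alpha P <->
      exists Q, max_ideal (Tal wf R alpha) Q /\
                (forall x, P x <-> (Q x /\ R x)))) /\
  (* (c) *)
  closed_in_Max R (Crit wf R alpha).
Proof.
move=> hR hqf had.
have [hmax hsep] := Crit_max_separated hR hqf had wf lt_total alpha.
have hT := Tal_subring hR hmax; have unitP := ext_ideal_Tal_unit hR hqf had wf lt_total alpha.
split; [|split=> //; split; last exact: (closed_in_Max_separated hR hmax hsep)].
  move=> P hP; have [hPi _ _] := hP.
  have hPT : subset_of P (Tal wf R alpha) by move=> x /(ideal_sub hPi)/(sub_Tal hR hmax).
  rewrite (ideal_full hT (gen_ideal_ideal hT hPT)) -/(ext_ideal P _) (unitP P hP).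
  by split=> [/NNPP|CP /(_ CP)].
move=> P hP; split=> [/(Crit_ext_ideal_max hR hqf had lt_total) [PTmax PTR]|].
  by exists (ext_ideal P (Tal wf R alpha)).
move=> [Q [[hQi hQ1 _] PQ]]; apply: NNPP => /(unitP P hP) PT1.
by apply/hQ1/(gen_ideal_min hQi _ PT1) => x /PQ [].
Qed.
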